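(* Let $(V,\phi)$ be a unitary vertex operator superalgebra. Then $V$ is self-dual, i.e. $V$ is isomorphic, as a $V$-module, to its contragredient module $V'$.
   Context: A vertex operator superalgebra (VOSA) $(V,Y,\mathbf 1,\omega)$ is a $\mathbb Z_2$-graded space $V=V_{\bar0}\oplus V_{\bar1}$ with vertex operators $Y(v,z)=\sum v_nz^{-n-1}$, vacuum $\mathbf 1$ and conformal vector $\omega$ with $L(n)=\omega_{n+1}$ satisfying the Virasoro relations, the $L(-1)$-derivative property, a grading $V=\bigoplus_{n\in\frac12\mathbb Z}V_n$ ($V_{\bar0}$ = integer weights, $V_{\bar1}$ = half-odd weights, $L(0)|_{V_n}=n$, finite-dimensional, zero for $n\ll0$), truncation, vacuum and creation axioms, and the super Jacobi identity with sign $(-1)^{[u][v]}$. An anti-linear involution $\phi$ of $V$ is an anti-linear bijection of order 2 with $\phi(\mathbf 1)=\mathbf 1$, $\phi(\omega)=\omega$, $\phi(u_nv)=\phi(u)_n\phi(v)$. $(V,\phi)$ is unitary if there is a positive definite Hermitian form $(\,,)$ on $V$ with $(Y(e^{zL(1)}(-1)^{L(0)+2L(0)^2}z^{-2L(0)}a,z^{-1})u,v)=(u,Y(\phi(a),z)v)$ for all $a,u,v\in V$. For a $V$-module $M=\bigoplus_{\lambda\in\mathbb C}M_\lambda$ (graded by $L(0)$-eigenvalues), the contragredient module is $M'=\bigoplus_\lambda M_\lambda^*$ with $\langle Y'(a,z)w',w\rangle=\langle w',Y(e^{zL(1)}(-1)^{L(0)+2L(0)^2}z^{-2L(0)}a,z^{-1})w\rangle$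 for $a\in V$, $w\in M$, $w'\in M'$. *)

(* Vertex operator superalgebras over C = R[i] (R : realType),
   written in components: Y(u,z) = \sum_n u_n z^{-n-1} is encoded by the mode map
   Y : V -> int -> V -> V,  Y u n v = u_n v. *)
From HB Require Import structures.
From mathcomp Require Import all_boot all_order all_algebra.
From mathcomp Require Export complex reals.
Set Implicit Arguments. Unset Strict Implicit. Unset Printing Implicit Defensive.
Import Order.TTheory GRing.Theory Num.Theory.
Local Open Scope ring_scope.

Section VOSA.
Variable C : numClosedFieldType.
Variable V : lmodType C.
Variable Y : V -> int -> V -> V.
Variables (vac om : V).

Definition Lop (n : int) : V -> V := Y om (n + 1).

(* v is L(0)-homogeneous of weight j/2 (j : int); v = 0 allowed *)
Definition homog (j : int) (v : V) : Prop :=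
  Lop 0 v = ((j%:~R : C) / 2%:R) *: v.

(* parity of an element: b = false (even, V_0bar = integer weights) or
   b = true (odd, V_1bar = half-odd weights); v is a finite sum of
   homogeneous vectors whose weights j/2 have (odd j) = b *)
Definition parity_homog (b : bool) (v : V) : Prop :=
  exists s : seq (int * V),
    (forall p, p \in s -> homog p.1 p.2 /\ odd (absz p.1) = b) /\
    v = \sum_(p <- s) p.2.

Definition fin_dim_sub (P : V -> Prop) : Prop :=
  exists s : seq V, forall v, P v ->
    exists c : nat -> C, v = \sum_(i < size s) c i *: s`_i.

Definition binz (r : int) (i : nat) : C :=
  (\prod_(l < i) (r%:~R - (l : nat)%:R)) / (i`!)%:R.

(* Component form of the super Jacobi identity (Borcherds identity) for
   parity-homogeneous u, v; the sums over i are finite by truncation, and N is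
   any bound beyond which all terms vanish. *)
Definition super_jacobi : Prop :=
  forall (bu bv : bool) (u v w : V) (p q r : int) (N : nat),
    parity_homog bu u -> parity_homog bv v ->
    (forall i : nat, (N <= i)%N ->
       Y u (r + i%:Z) v = 0 /\ Y v (q + i%:Z) w = 0 /\ Y u (p + i%:Z) w = 0) ->
    \sum_(i < N) binz p i *: Y (Y u (r + i%:Z) v) (p + q - i%:Z) w =
    \sum_(i < N) ((-1) ^+ i * binz r i) *:
        (Y u (p + r - i%:Z) (Y v (q + i%:Z) w)
         - ((-1) ^+ absz r * (-1) ^+ (bu && bv)) *:
             Y v (q + r - i%:Z) (Y u (p + i%:Z) w)).

Definition is_VOSA : Prop :=
  (forall n a u u' v, Y (a *: u + u') n v = a *: Y u n v + Y u' n v) /\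
  (forall n a u v v', Y u n (a *: v + v') = a *: Y u n v + Y u n v') /\
  (forall u v, exists N : int, forall n, N <= n -> Y u n v = 0) /\
  (forall n v, Y vac n v = if n == -1 then v else 0) /\
  (forall u n, 0 <= n -> Y u n vac = 0) /\
  (forall u, Y u (-1) vac = u) /\
  (exists c : C, forall (m n : int) (w : V),
     Lop m (Lop n w) - Lop n (Lop m w) =
       (m - n)%:~R *: Lop (m + n) w +
       (if m + n == 0 then ((m ^+ 3 - m)%:~R / 12%:R) * c else 0) *: w) /\
  (* L(-1)-derivative property: Y(L(-1)u,z) = d/dz Y(u,z) *)
  (forall u n w, Y (Lop (-1) u) n w = - (n%:~R) *: Y u (n - 1) w) /\
  (forall v, exists s : seq (int * V),
     (forall p, p \in s -> homog p.1 p.2) /\ v = \sum_(p <- s) p.2) /\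
  (forall j, fin_dim_sub (homog j)) /\
  (exists N : int, forall j, j < N -> forall v, homog j v -> v = 0) /\
  super_jacobi.

(* coefficient of z^{-n-1} in
   <w', Y(e^{zL(1)} (-1)^{L(0)+2L(0)^2} z^{-2L(0)} a, z^{-1}) w>
   for a of weight j/2, given F b m = <w', b_m w>, and K with L(1)^K a = 0.
   Note (-1)^{h + 2h^2} = (-1)^{j(j+1)/2} for h = j/2. *)
Definition opp_coef (j : int) (a : V) (n : int) (K : nat)
    (F : V -> int -> C) : C :=
  (-1) ^+ (absz (j * (j + 1)) %/ 2) *
  \sum_(k < K) ((k`!)%:R)^-1 * F (iter k (Lop 1) a) (j - n - 2 - k%:Z).

(* linear functionals and the contragredient module V' = (+)_n V_n^* *)
Definition lin_functional (f : V -> C) : Prop :=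
  forall a u v, f (a *: u + v) = a * f u + f v.

Definition in_contragredient (f : V -> C) : Prop :=
  lin_functional f /\
  exists N : nat, forall j : int, (N <= absz j)%N -> forall v, homog j v -> f v = 0.

(* V is isomorphic to V' as a V-module: a linear bijection Phi : V -> V'
   with Phi (a_n v) = a'_n (Phi v), where Y'(a,z) = \sum a'_n z^{-n-1} is the
   contragredient vertex operator (stated for L(0)-homogeneous a). *)
Definition self_dual : Prop :=
  exists Phi : V -> (V -> C),
    (forall v, in_contragredient (Phi v)) /\
    (forall a u v w, Phi (a *: u + v) w = a * Phi u w + Phi v w) /\
    (forall u v, Phi u = Phi v -> u = v) /\
    (forall f, in_contragredient f -> exists v, Phi v = f) /\
    (forall (j : int) (a : V) (n : int) (K : nat) (v w : V),
       homog j a -> iter K (Lop 1) a = 0 ->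
       Phi (Y a n v) w = opp_coef j a n K (fun b m => Phi v (Y b m w))).

Definition anti_linear_involution (phi : V -> V) : Prop :=
  (forall a u v, phi (a *: u + v) = a^* *: phi u + phi v) /\
  (forall u, phi (phi u) = u) /\
  phi vac = vac /\ phi om = om /\
  (forall u n v, phi (Y u n v) = Y (phi u) n (phi v)).

Definition unitary (phi : V -> V) : Prop :=
  anti_linear_involution phi /\
  exists B : V -> V -> C,
    (forall a u u' v, B (a *: u + u') v = a * B u v + B u' v) /\
    (forall u v, B u v = (B v u)^*) /\
    (forall v, v != 0 -> 0 < B v v) /\
    (forall (j : int) (a : V) (n : int) (K : nat) (u v : V),
       homog j a -> iter K (Lop 1) a = 0 ->
       opp_coef j a n K (fun b m => B (Y b m u) v) = B u (Y (phi a) n v)).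

End VOSA.

(** The vector [v] is sent to the functional [w |-> (w, phi v)] on [V].  The
    invariance of the form for [a = omega] makes [L(0)] self-adjoint, so
    distinct weight spaces are orthogonal and this functional vanishes on all
    but finitely many of them: it lies in [V'].  The invariance of the form is
    exactly the contragredient module law, positivity gives injectivity, and
    surjectivity is the Riesz representation theorem on the finite-dimensional
    sum of the weight spaces on which a given element of [V'] is supported. *)
From Stdlib Require Import FunctionalExtensionality.
From mathcomp Require Import all_boot all_order all_algebra complex reals.
Import GRing.Theory Num.Theory.
Set Implicit Arguments. Unset Strict Implicit. Unset Printing Implicit Defensive.
Local Open Scope ring_scope.

Section Span.
Variables (K : pzRingType) (V : lmodType K).

Inductive in_span (s : seq V) : V -> Prop :=
| in_span0 : in_span s 0
| in_spanS a u w : u \in s -> in_span s w -> in_span s (a *: u + w).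

Lemma in_span_lin s a x y : in_span s x -> in_span s y -> in_span s (a *: x + y).
Proof.
move=> sx; elim: sx a y => [|b u w us _ IH] a y sy; first by rewrite scaler0 add0r.
by rewrite scalerDr scalerA -addrA; apply: in_spanS => //; apply: IH.
Qed.

Lemma in_span_mem s u : u \in s -> in_span s u.
Proof.
by move=> us; rewrite -[u]addr0 -[u in u + 0]scale1r; apply: in_spanS (in_span0 _).
Qed.

Lemma in_span_subset s t x : {subset s <= t} -> in_span s x -> in_span t x.
Proof.
move=> st; elim=> [|a u w us _ IH]; first exact: in_span0.
by apply: in_spanS => //; apply: st.
Qed.

Lemma in_span_sum s (c : nat -> K) : in_span s (\sum_(i < size s) c i *: s`_i).
Proof.
apply: (big_ind (in_span s)); first exact: in_span0.
  by move=> x y sx sy; rewrite -[x]scale1r; apply: in_span_lin.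
by move=> i _; rewrite -[_ *: _]addr0; apply: in_spanS (in_span0 _); apply: mem_nth.
Qed.

End Span.

Section LinearFunctional.
Variables (C : numClosedFieldType) (V : lmodType C) (f : V -> C).
Hypothesis f_lin : lin_functional f.

Lemma lin_functionalD x y : f (x + y) = f x + f y.
Proof. by rewrite -{1}[x]scale1r f_lin mul1r. Qed.

Lemma lin_functional0 : f 0 = 0.
Proof. by apply: (addrI (f 0)); rewrite -lin_functionalD !addr0. Qed.

Lemma lin_functionalZ a x : f (a *: x) = a * f x.
Proof. by rewrite -[a *: x]addr0 f_lin lin_functional0 addr0. Qed.

Lemma lin_functional_sum (I : Type) (r : seq I) (P : pred I) (F : I -> V) :
  f (\sum_(i <- r | P i) F i) = \sum_(i <- r | P i) f (F i).
Proof. exact: (big_morph f lin_functionalD lin_functional0). Qed.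

End LinearFunctional.

Lemma in_span_ext (C : numClosedFieldType) (V : lmodType C) (f g : V -> C)
    (s : seq V) :
  lin_functional f -> lin_functional g -> {in s, f =1 g} ->
  forall y, in_span s y -> f y = g y.
Proof.
move=> f_lin g_lin fg y; elim=> [|a u w us _ IH].
  by rewrite (lin_functional0 f_lin) (lin_functional0 g_lin).
by rewrite f_lin g_lin IH fg.
Qed.

Section HermitianForm.
Variables (C : numClosedFieldType) (V : lmodType C) (B : V -> V -> C).
Hypothesis B_linl : forall a u u' v, B (a *: u + u') v = a * B u v + B u' v.
Hypothesis B_herm : forall u v, B u v = (B v u)^*.
Hypothesis B_pos : forall v, v != 0 -> 0 < B v v.

Lemma herm_lin_functional v : lin_functional (B^~ v).
Proof. by move=> a u u'; apply: B_linl. Qed.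

Lemma herm_linr a u u' v : B v (a *: u + u') = a^* * B v u + B v u'.
Proof. by rewrite B_herm B_linl rmorphD rmorphM /= -!B_herm. Qed.

Lemma hermZl v a u : B (a *: u) v = a * B u v.
Proof. exact: (lin_functionalZ (herm_lin_functional v)). Qed.

Lemma herm0r v : B v 0 = 0.
Proof. by rewrite B_herm (lin_functional0 (herm_lin_functional v)) conjC0. Qed.

Lemma hermDr v u u' : B v (u + u') = B v u + B v u'.
Proof. by rewrite -{1}[u]scale1r herm_linr rmorph1 mul1r. Qed.

Lemma hermZr v a u : B v (a *: u) = a^* * B v u.
Proof. by rewrite -[a *: u]addr0 herm_linr herm0r addr0. Qed.

Lemma hermNr v u : B v (- u) = - B v u.
Proof. by rewrite -scaleN1r hermZr rmorphN rmorph1 mulN1r. Qed.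

Lemma hermBr v u u' : B v (u - u') = B v u - B v u'.
Proof. by rewrite hermDr hermNr. Qed.

Lemma herm_sumr v (I : Type) (r : seq I) (P : pred I) (F : I -> V) :
  B v (\sum_(i <- r | P i) F i) = \sum_(i <- r | P i) B v (F i).
Proof. exact: (big_morph (B v) (hermDr v) (herm0r v)). Qed.

Lemma herm_inj_r x y : (forall w, B w x = B w y) -> x = y.
Proof.
move=> Bxy; apply/eqP; rewrite -subr_eq0; apply/negPn/negP => /B_pos.
by rewrite hermBr Bxy subrr lt0r eqxx.
Qed.

(* Riesz representation on a finite span, by induction on the generators: the
   new generator [u] is split as [p + e] with [p] representing [B^~ u] on the
   old span, so that [e] is orthogonal to it. *)
Lemma herm_riesz_span (s : seq V) (f : V -> C) : lin_functional f ->
  exists x, in_span s x /\ forall y, in_span s y -> B y x = f y.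
Proof.
elim: s f => [|u t IH] f f_lin.
  exists 0; split; first exact: in_span0.
  exact: (in_span_ext (herm_lin_functional 0) f_lin).
have [x' [sx' Bx']] := IH f f_lin.
have [p [sp Bp]] := IH _ (herm_lin_functional u).
have t_sub : {subset t <= u :: t} by move=> z zt; rewrite inE zt orbT.
have [e ue] : {e | u = p + e} by exists (u - p); rewrite addrC subrK.
have e_orth y : in_span t y -> B y e = 0.
  have -> : e = u - p by rewrite ue addrAC subrr add0r.
  by move=> sy; rewrite hermBr Bp ?subrr.
have [e0|e_neq0] := eqVneq e 0.
  exists x'; split; first exact: in_span_subset t_sub sx'.
  apply: (in_span_ext (herm_lin_functional x') f_lin) => y.
  rewrite inE => /orP[/eqP->|yt]; last exact/Bx'/in_span_mem.
  by rewrite ue e0 addr0 Bx'.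
pose c := (f e / B e e)^*.
exists (c *: e + x'); split.
  have -> : c *: e + x' = c *: u + (- c *: p + x').
    by rewrite ue scalerDr scaleNr addrACA addrN add0r.
  apply: in_spanS; first by rewrite inE eqxx.
  by apply: in_span_lin; apply: in_span_subset t_sub _.
apply: (in_span_ext (herm_lin_functional _) f_lin) => y.
rewrite inE => /orP[/eqP->|yt]; last first.
  have yt_span := in_span_mem yt.
  by rewrite herm_linr e_orth // mulr0 add0r Bx'.
have Bee_neq0 : B e e != 0 by apply: lt0r_neq0; apply: B_pos.
have Bex' : B e x' = 0 by rewrite B_herm e_orth // conjC0.
rewrite herm_linr conjCK ue !(lin_functionalD (herm_lin_functional _)).
by rewrite (e_orth p sp) Bex' Bx' // add0r addr0 divfK // (lin_functionalD f_lin) addrC.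
Qed.

End HermitianForm.

Section UnitarySelfDual.
Variables (C : numClosedFieldType) (V : lmodType C).
Variables (Y : V -> int -> V -> V) (vac om : V) (phi : V -> V) (B : V -> V -> C).
Variable c : C.
Hypothesis Y_linr :
  forall n a u v v', Y u n (a *: v + v') = a *: Y u n v + Y u n v'.
Hypothesis Y_vac_ge0 : forall u n, 0 <= n -> Y u n vac = 0.
Hypothesis Y_vac_m1 : forall u, Y u (-1) vac = u.
Hypothesis virasoro : forall (m n : int) (w : V),
  Lop Y om m (Lop Y om n w) - Lop Y om n (Lop Y om m w) =
    (m - n)%:~R *: Lop Y om (m + n) w +
    (if m + n == 0 then ((m ^+ 3 - m)%:~R / 12%:R) * c else 0) *: w.
Hypothesis homog_decomp : forall v, exists s : seq (int * V),
  (forall p, p \in s -> homog Y om p.1 p.2) /\ v = \sum_(p <- s) p.2.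
Hypothesis homog_fin_dim : forall j, fin_dim_sub (homog Y om j).
Hypothesis phi_semilinear : forall a u v, phi (a *: u + v) = a^* *: phi u + phi v.
Hypothesis phiK : involutive phi.
Hypothesis phi_om : phi om = om.
Hypothesis phi_Y : forall u n v, phi (Y u n v) = Y (phi u) n (phi v).
Hypothesis B_linl : forall a u u' v, B (a *: u + u') v = a * B u v + B u' v.
Hypothesis B_herm : forall u v, B u v = (B v u)^*.
Hypothesis B_pos : forall v, v != 0 -> 0 < B v v.
Hypothesis B_invariant : forall j a n K u v,
  homog Y om j a -> iter K (Lop Y om 1) a = 0 ->
  opp_coef Y om j a n K (fun b m => B (Y b m u) v) = B u (Y (phi a) n v).

Lemma Yr0 u n : Y u n 0 = 0.
Proof.
have := Y_linr n 1 u 0 0; rewrite scaler0 addr0 scale1r => /esym/eqP.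
by rewrite -subr_eq0 addrK => /eqP.
Qed.

Lemma Lop_vac n : -1 <= n -> Lop Y om n vac = 0.
Proof. by move=> n_ge; rewrite /Lop Y_vac_ge0 // -[0](addNr 1) lerD2r. Qed.

Lemma Lop_m2_vac : Lop Y om (-2) vac = om.
Proof. by rewrite /Lop Y_vac_m1. Qed.

(* Both follow from the Virasoro relation applied to [vac], as [om = L(-2) vac]. *)
Lemma Lop1_om : Lop Y om 1 om = 0.
Proof.
have := virasoro 1 (-2) vac; rewrite Lop_m2_vac !Lop_vac // /Lop Yr0 subr0.
by rewrite scaler0 add0r scale0r.
Qed.

Lemma Lop0_om : Lop Y om 0 om = 2%:R *: om.
Proof.
have := virasoro 0 (-2) vac; rewrite Lop_m2_vac !Lop_vac // {2}/Lop Yr0 subr0.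
by rewrite scale0r addr0.
Qed.

Lemma homog_om : homog Y om 4 om.
Proof.
rewrite /homog Lop0_om; congr (_ *: _).
by rewrite (_ : 4%:~R = 2%:R * 2%:R) ?mulfK ?pnatr_eq0 // -natrM.
Qed.

Lemma herm_Lop0_sym w x : B (Lop Y om 0 w) x = B w (Lop Y om 0 x).
Proof.
have := B_invariant 1 w x homog_om (Lop1_om : iter 1 _ om = 0).
rewrite /opp_coef big_ord1 phi_om.
by rewrite [X in (-1) ^+ X](_ : _ = 10)%N // -signr_odd expr0 fact0 invr1 !mul1r.
Qed.

Lemma herm_homog_orth j k w x :
  homog Y om j w -> homog Y om k x -> j != k -> B w x = 0.
Proof.
move=> hw hx; apply: contraNeq => Bwx_neq0; apply/eqP.
have := herm_Lop0_sym w x; rewrite hw hx (hermZl B_linl) (hermZr B_linl B_herm).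
rewrite fmorph_div rmorph_int rmorph_nat => /(mulIf Bwx_neq0).
by move/(mulIf _); rewrite invr_eq0 pnatr_eq0 => /(_ isT)/intr_inj.
Qed.

Lemma herm_homog_sum_orth j w (P : pred (int * V)) (s : seq (int * V)) :
  (forall p, p \in s -> homog Y om p.1 p.2) -> homog Y om j w ->
  (forall p, p \in s -> P p -> p.1 != j) ->
  B w (\sum_(p <- s | P p) p.2) = 0.
Proof.
move=> hs hw s_neq; rewrite (herm_sumr B_linl B_herm).
apply: big1_seq => p /andP[Pp ps].
by apply: (herm_homog_orth hw (hs p ps)); rewrite eq_sym s_neq.
Qed.

Lemma in_span_homog_bounded (M : nat) : exists T : seq V,
  forall j v, (absz j < M)%N -> homog Y om j v -> in_span T v.
Proof.
elim: M => [|M [T hT]]; first by exists [::].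
have [s1 h1] := homog_fin_dim M; have [s2 h2] := homog_fin_dim (- M%:Z).
exists (s1 ++ s2 ++ T) => j v; rewrite ltnS leq_eqVlt => /orP[/eqP jM | jM] hv.
- case: j jM hv => n /= jM hv; subst M.
    have [a ->] := h1 v hv.
    by apply: in_span_subset (in_span_sum _ _) => z zs; rewrite !mem_cat zs.
  rewrite NegzE in hv; have [a ->] := h2 v hv.
  by apply: in_span_subset (in_span_sum _ _) => z zs; rewrite !mem_cat zs orbT.
- by apply: in_span_subset (hT j v jM hv) => z zT; rewrite !mem_cat zT !orbT.
Qed.

Lemma lin_functional_homog_ext (f g : V -> C) :
  lin_functional f -> lin_functional g ->
  (forall j w, homog Y om j w -> f w = g w) -> f =1 g.
Proof.
move=> f_lin g_lin fg w; have [s [hs ->]] := homog_decomp w.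
rewrite (lin_functional_sum f_lin) (lin_functional_sum g_lin).
by apply: eq_big_seq => p ps; apply: fg (hs p ps).
Qed.

Definition herm_dual (v : V) : V -> C := fun w => B w (phi v).

Lemma herm_dual_contragredient v : in_contragredient Y om (herm_dual v).
Proof.
split; first exact: herm_lin_functional.
have [s [hs vE]] := homog_decomp (phi v).
exists (\max_(p <- s) absz p.1).+1 => j j_big w hw.
rewrite /herm_dual vE; apply: (herm_homog_sum_orth hs hw) => p ps _.
apply: contraTneq j_big => <-.
by rewrite -ltnNge ltnS (@leq_bigmax_seq _ _ xpredT (fun q : int * V => absz q.1) p ps).
Qed.

Lemma herm_dual_lin a u v w :
  herm_dual (a *: u + v) w = a * herm_dual u w + herm_dual v w.
Proof. by rewrite /herm_dual phi_semilinear (herm_linr B_linl B_herm) conjCK. Qed.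

Lemma herm_dual_inj u v : herm_dual u = herm_dual v -> u = v.
Proof.
move=> uv; rewrite -[u]phiK -[v]phiK; congr phi.
by apply: (herm_inj_r B_linl B_herm B_pos) => w; apply: (congr1 (@^~ w) uv).
Qed.

(* [f] is represented on the weights [|j| < N] by Riesz; cutting the
   representing vector down to these weights also represents [f] on the
   others, where both vanish. *)
Lemma herm_dual_surj f : in_contragredient Y om f -> exists v, herm_dual v = f.
Proof.
move=> [f_lin [N f_supp]].
have [T hT] := in_span_homog_bounded N.
have [x [_ Bx]] := herm_riesz_span B_linl B_herm B_pos T f_lin.
have [s [hs xE]] := homog_decomp x.
pose small (p : int * V) := (absz p.1 < N)%N.
exists (phi (\sum_(p <- s | small p) p.2)); apply: functional_extensionality.
apply: lin_functional_homog_ext f_lin _ => [|j w hw]; first exact: herm_lin_functional.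
rewrite /herm_dual phiK.
have [j_small | j_big] := ltnP (absz j) N.
  rewrite -(Bx w (hT j w j_small hw)) xE [in RHS](bigID small) /=.
  rewrite (hermDr B_linl B_herm).
  rewrite [X in _ + X](herm_homog_sum_orth hs hw) ?addr0 // => p _.
  by apply: contraNneq; rewrite /small => ->.
rewrite (f_supp j j_big w hw) (herm_homog_sum_orth hs hw) // => p _.
by apply: contraTneq; rewrite /small => ->; rewrite ltnNge j_big.
Qed.

Lemma herm_dual_Y j a n K v w : homog Y om j a -> iter K (Lop Y om 1) a = 0 ->
  herm_dual (Y a n v) w = opp_coef Y om j a n K (fun b m => herm_dual v (Y b m w)).
Proof. by move=> ha aK; rewrite /herm_dual phi_Y B_invariant. Qed.

Lemma unitary_self_dual : self_dual Y om.
Proof.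
exists herm_dual; split; first exact: herm_dual_contragredient.
split; first exact: herm_dual_lin.
split; first exact: herm_dual_inj.
split; first exact: herm_dual_surj.
exact: herm_dual_Y.
Qed.

End UnitarySelfDual.

Theorem mainTheorem2 (R : realType) (V : lmodType R[i])
  (Y : V -> int -> V -> V) (vac om : V) (phi : V -> V) :
  is_VOSA Y vac om -> unitary Y vac om phi -> self_dual Y om.
Proof.
move=> [_ [Y_linr [_ [_ [Y_vac_ge0 [Y_vac_m1 [[c vir] [_ [decomp [fin_dim _]]]]]]]]]].
move=> [[phi_semilin [phiK [_ [phi_om phi_Y]]]] [B [B_linl [B_herm [B_pos B_inv]]]]].
exact: (unitary_self_dual Y_linr Y_vac_ge0 Y_vac_m1 vir decomp fin_dim
  phi_semilin phiK phi_om phi_Y B_linl B_herm B_pos B_inv).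
Qed.
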